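(* Let $q$ be a prime power, $N\ge n\ge 1$, and $1\le d\le n$. Then $\chi'_d(N\times n,q)=q^{Nd}$.
   Context: $\mathbb{F}_q^{N\times n}$ is the set of $N\times n$ matrices over the finite field $\mathbb{F}_q$, with rank distance $d_R(M_1,M_2)=\mathrm{Rk}(M_1-M_2)$. A $d$-distance coloring of $\mathbb{F}_q^{N\times n}$ is a map $\Gamma:\mathbb{F}_q^{N\times n}\to\{1,\dots,L\}$ such that $\Gamma(M_1)\ne\Gamma(M_2)$ whenever $M_1\neq M_2$ and $d_R(M_1,M_2)\le d$. $\chi'_d(N\times n,q)$ denotes the minimum number $L$ of colors in a $d$-distance coloring. *)

From HB Require Import structures.
From mathcomp Require Import all_boot all_order all_algebra.
Set Implicit Arguments. Unset Strict Implicit. Unset Printing Implicit Defensive.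
Import GRing.Theory.
Local Open Scope ring_scope.

Definition rank_dist (F : fieldType) (N n : nat) (M1 M2 : 'M[F]_(N, n)) : nat :=
  \rank (M1 - M2).

Definition has_d_coloring (F : finFieldType) (N n d L : nat) : bool :=
  [exists Gamma : {ffun 'M[F]_(N, n) -> 'I_L},
     [forall M1 : 'M[F]_(N, n), forall M2 : 'M[F]_(N, n),
        ((M1 != M2) && (rank_dist M1 M2 <= d)%N) ==> (Gamma M1 != Gamma M2)]].

Lemma has_d_coloring_exists (F : finFieldType) (N n d : nat) :
  exists L, has_d_coloring F N n d L.
Proof.
exists #|{: 'M[F]_(N, n)}|; apply/existsP; exists (finfun (@enum_rank _)).
apply/forallP=> M1; apply/forallP=> M2; apply/implyP=> /andP[ne _].
by rewrite !ffunE; apply: contra ne => /eqP/enum_rank_inj ->.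
Qed.

(* chi'_d(N x n, q): minimum number of colours of a d-distance colouring,
   where F is a finite field with q elements *)
Definition chi_d (F : finFieldType) (N n d : nat) : nat :=
  ex_minn (has_d_coloring_exists F N n d).

(* The lower bound holds because any two N x d matrices are at rank distance
   at most d, so a colouring must be injective on the N x d matrices, which
   embed isometrically into the N x n ones.  For the upper bound, identify
   F^N with a field extension L of degree N over F, and N x N matrices with
   q-linearised polynomials sum_(i < N) c_i X^(q^i) over L.  A nonzero such
   polynomial with c_i = 0 for i >= N - d has at most q^(N-d-1) roots, so its
   kernel has dimension < N - d and its rank is > d; colouring a matrix by
   its top d coefficients c_(N-d), ..., c_(N-1) therefore works with
   (q^N)^d colours, first for N x N matrices and then, by restriction, for
   N x n ones. *)

From HB Require Import structures.
From mathcomp Require Import all_boot all_order all_algebra.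
From mathcomp Require Import zify.
From mathcomp Require Import falgebra fieldext separable galois finfield.
Set Implicit Arguments. Unset Strict Implicit. Unset Printing Implicit Defensive.
Import GRing.Theory.
Import VectorInternalTheory.
Local Open Scope ring_scope.

Section Colourings.

Variable F : finFieldType.

Lemma has_d_coloringP N n d L :
  reflect (exists Gamma : 'M[F]_(N, n) -> 'I_L, forall M1 M2 : 'M[F]_(N, n),
             M1 != M2 -> (\rank (M1 - M2)%R <= d)%N -> Gamma M1 != Gamma M2)
          (has_d_coloring F N n d L).
Proof.
apply: (iffP existsP) => [[Gamma /forallP colG] | [Gamma colG]].
  exists Gamma => M1 M2 neM rkM.
  by have /forallP/(_ M2)/implyP := colG M1; apply; rewrite neM.
exists (finfun Gamma); apply/forallP => M1; apply/forallP => M2.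
by apply/implyP => /andP[neM rkM]; rewrite !ffunE; apply: colG.
Qed.

Lemma has_d_coloring_fin (C : finType) N n d L (Gamma : 'M[F]_(N, n) -> C) :
  (#|C| <= L)%N ->
  (forall M1 M2, M1 != M2 -> (\rank (M1 - M2)%R <= d)%N -> Gamma M1 != Gamma M2) ->
  has_d_coloring F N n d L.
Proof.
move=> leCL colG; apply/has_d_coloringP.
exists (fun M => widen_ord leCL (enum_rank (Gamma M))) => M1 M2 neM rkM.
by apply: contra (colG _ _ neM rkM) => /eqP[/val_inj/enum_rank_inj ->].
Qed.

Lemma has_d_coloring_widen N n1 n2 d L :
  (n1 <= n2)%N -> has_d_coloring F N n2 d L -> has_d_coloring F N n1 d L.
Proof.
move=> le_n12 /has_d_coloringP[Gamma colG]; apply/has_d_coloringP.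
pose P : 'M[F]_(n1, n2) := pid_mx n1.
have freeP : row_free P by rewrite /row_free rank_pid_mx.
exists (fun M => Gamma (M *m P)) => M1 M2 neM rkM; apply: colG.
  by apply: contra neM => /eqP/(row_free_inj freeP)->.
by rewrite -mulmxBl mxrankMfree.
Qed.

Lemma card_le_has_d_coloring N d L :
  has_d_coloring F N d d L -> (#|F| ^ (N * d) <= L)%N.
Proof.
case/has_d_coloringP => Gamma colG.
have injG : injective Gamma.
  move=> M1 M2 eqG; apply/eqP; apply: contraTT (eqxx (Gamma M1)) => neM.
  by rewrite {2}eqG colG ?rank_leq_col.
by have := leq_card Gamma injG; rewrite card_mx card_ord.
Qed.

End Colourings.

Lemma chi_d_eq (F : finFieldType) N n d L :
  has_d_coloring F N n d L ->
  (forall L', has_d_coloring F N n d L' -> (L <= L')%N) ->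
  chi_d F N n d = L.
Proof.
rewrite /chi_d; case: ex_minnP => k colk mink colL minL.
by apply/eqP; rewrite eqn_leq mink // minL.
Qed.

Lemma card_fieldExt (F : finFieldType) (L : fieldExtType F) :
  #|finvect_type L| = (#|F| ^ vector.dim (finvect_type L))%N.
Proof.
have := @card_vspace F (finvect_type L) _ (fullv : {vspace finvect_type L}).
by rewrite (@card_vspacef F (finvect_type L) _) dimvf.
Qed.

Section FieldOfDegree.

Variables (F : finFieldType) (N : nat).
Hypothesis N_gt0 : (0 < N)%N.
Local Notation q := #|F|.
Local Notation m := (q ^ N)%N.

Lemma expn_card_gt1 : (1 < m)%N.
Proof. by rewrite (ltn_exp2l 0) ?finNzRing_gt1. Qed.

(* The roots of X^m - X form the field fixed by the N-th power of the
   Frobenius automorphism x |-> x^q, which generates Gal(L / F). *)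
Lemma card_splitting_field_Xq_X (L : splittingFieldType F) :
  splittingFieldFor 1 ('X^m - 'X) {:L} -> #|finvect_type L| = m.
Proof.
case=> zs Dzs defL; have m_gt1 := expn_card_gt1; have m_gt0 := ltnW m_gt1.
have m1_gt0 : (0 < m.-1)%N by rewrite -ltnS prednK.
have [p _ pcharFp] := finPcharP F.
have pcharL : p \in [pchar L] by rewrite pchar_lalg.
have /finField_galois_generator[/= a _ Da] : (1 <= {:L})%VS by apply: sub1v.
rewrite dimv1 expn1 in Da.
have m0 : (m%:R : L) = 0.
  have q_pexp : q = (p ^ logn p q)%N := card_pprimeChar pcharFp.
  have logq_gt0 : (0 < logn p q)%N.
    by move: q_pexp (finNzRing_gt1 F); case: (logn p q) => // ->.
  rewrite q_pexp -expnM natrX (pcharf0 pcharL) expr0n /=.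
  by rewrite muln_eq0 eqn0Ngt logq_gt0 eqn0Ngt N_gt0.
have DXq : ('X^m - 'X : {poly L}) = ('X^(m.-1) - 1) * ('X - 0).
  by rewrite subr0 mulrBl mul1r -exprSr prednK.
have uniq_zs : uniq zs.
  rewrite -separable_prod_XsubC -(eqp_separable Dzs) DXq separable_root andbC.
  rewrite /root !hornerE subr_eq0 eq_sym expr0n gtn_eqF ?oner_eq0 //=.
  rewrite cyclotomic.separable_Xn_sub_1 // -subn1 natrB // subr_eq0.
  by rewrite m0 eq_sym oner_eq0.
pose E := fixedSpace (a ^+ N)%g.
have zsE : zs =i E.
  move=> z; rewrite -root_prod_XsubC -(eqp_root Dzs) (sameP fixedSpaceP eqP).
  rewrite /root !hornerE subr_eq0 /=; congr (_ == z).
  elim: (N) => [|i IHi]; first by rewrite gal_id.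
  by rewrite expgSr expnSr exprM IHi galM ?Da ?memvf.
have fixed_full : E = {:L}%VS.
  apply/eqP; rewrite eqEsubv subvf -defL -[E]subfield_closed agenvS //.
  by rewrite subv_add sub1v; apply/span_subvP=> z; rewrite zsE.
have /eq_card-> : finvect_type L =i zs by move=> z; rewrite zsE fixed_full memvf.
apply: succn_inj; rewrite (card_uniqP _) //= -(size_prod_XsubC _ id).
by rewrite -(eqp_size Dzs) size_polyDl size_polyXn // size_polyN size_polyX.
Qed.

Lemma fieldExt_of_dim : {L : fieldExtType F | \dim {:L} = N}.
Proof.
have XqX_neq0 : ('X^m - 'X : {poly F}) != 0.
  rewrite -size_poly_eq0 size_polyDl size_polyXn //.
  by rewrite size_polyN size_polyX ltnS expn_card_gt1.
have [L splitL] := FinSplittingFieldFor XqX_neq0.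
rewrite [map_poly _ _]rmorphB rmorphXn /= map_polyX in splitL.
exists L; apply: (expnI (finNzRing_gt1 F)).
by rewrite dimvf -card_fieldExt card_splitting_field_Xq_X.
Qed.

End FieldOfDegree.

Section LinearizedPolynomials.

Variables (F : finFieldType) (L : fieldExtType F).
Local Notation T := (finvect_type L).
Local Notation q := #|F|.
Local Notation m := (vector.dim T).
Implicit Types (c : {ffun 'I_m -> T}) (x y : T).

Lemma expr_card_powD x y i : (x + y) ^+ (q ^ i) = x ^+ (q ^ i) + y ^+ (q ^ i).
Proof.
have [p p_pr pcharFp] := finPcharP F.
have pcharT : p \in [pchar T] by rewrite pchar_lalg.
apply: exprDn_pchar; rewrite pnatX; apply/orP; left.
by rewrite (card_pprimeChar pcharFp) pnatX pnatE // pcharT.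
Qed.

Lemma expr_card_pow (a : F) i : a ^+ (q ^ i) = a.
Proof. by elim: i => [|i IHi]; rewrite ?expr1 // expnSr exprM IHi expf_card. Qed.

Definition qpoly c : {poly T} := \sum_(i < m) c i *: 'X^(q ^ i).

Lemma qpoly_linear c (a : F) x y :
  (qpoly c).[a *: x + y] = a *: (qpoly c).[x] + (qpoly c).[y].
Proof.
rewrite !horner_sum scaler_sumr -big_split /=; apply: eq_bigr => i _.
by rewrite !hornerZ !hornerXn expr_card_powD exprZn expr_card_pow mulrDr scalerAr.
Qed.

Lemma qpolyB c c' : qpoly (c - c') = qpoly c - qpoly c'.
Proof. by rewrite /qpoly -sumrB; apply: eq_bigr => i _; rewrite !ffunE scalerBl. Qed.

Lemma coef_qpoly c (j : 'I_m) : (qpoly c)`_(q ^ j) = c j.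
Proof.
rewrite /qpoly coef_sum (bigD1 j) //= coefZ coefXn eqxx mulr1 big1 ?addr0 //.
move=> i neij; rewrite coefZ coefXn eqn_exp2l ?finNzRing_gt1 //.
by rewrite eq_sym (negbTE (neij : (i != j :> nat))) mulr0.
Qed.

Lemma qpoly_eq0 c : (qpoly c == 0) = (c == 0).
Proof.
apply/eqP/eqP => [c0 | ->]; last by rewrite -(subrr 0) qpolyB subrr.
by apply/ffunP => j; rewrite -coef_qpoly c0 coef0 ffunE.
Qed.

Lemma size_qpoly c t :
  (forall i : 'I_m, (t <= i)%N -> c i = 0) -> (size (qpoly c) <= (q ^ t.-1).+1)%N.
Proof.
move=> c_t; apply: leq_trans (size_sum _ _ _) _; apply/bigmax_leqP => i _.
have [lt_it | /c_t->] := ltnP i t; last by rewrite scale0r size_poly0.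
apply: leq_trans (size_scale_leq _ _) _.
rewrite size_polyXn ltnS leq_exp2l ?finNzRing_gt1 //.
by rewrite -ltnS prednK // (leq_ltn_trans _ lt_it).
Qed.

Definition qpoly_rV c (u : 'rV[F]_m) : 'rV[F]_m := v2r (qpoly c).[r2v u].

Fact qpoly_rV_is_linear c : linear (qpoly_rV c).
Proof. by move=> a u v; rewrite /qpoly_rV linearP qpoly_linear linearP. Qed.

HB.instance Definition _ c :=
  GRing.isLinear.Build F 'rV[F]_m 'rV[F]_m *:%R (qpoly_rV c) (qpoly_rV_is_linear c).

Definition qpoly_mx c : 'M[F]_m := lin1_mx (qpoly_rV c).

Lemma qpoly_mxB c c' : qpoly_mx (c - c') = qpoly_mx c - qpoly_mx c'.
Proof.
by apply/matrixP => i j; rewrite !mxE /qpoly_rV qpolyB hornerD hornerN linearB !mxE.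
Qed.

Lemma mul_qpoly_mx c u : u *m qpoly_mx c = v2r (qpoly c).[r2v u].
Proof. exact: mul_rV_lin1. Qed.

(* The row kernel of [qpoly_mx c] is an F-subspace of roots of [qpoly c]. *)
Lemma card_ker_qpoly_mx c :
  c != 0 -> (q ^ (m - \rank (qpoly_mx c)) < size (qpoly c))%N.
Proof.
move=> c_neq0; set K := kermx (qpoly_mx c).
pose rs := [seq r2v (v *m row_base K) : T | v <- enum 'rV[F]_(\rank K)].
have rs_roots : all (root (qpoly c)) rs.
  apply/allP => _ /mapP[v _ ->]; rewrite rootE.
  have /sub_kermxP : (v *m row_base K <= K)%MS.
    by rewrite (submx_trans (submxMl v _)) ?eq_row_base.
  by rewrite mul_qpoly_mx -(linear0 (@v2r F T)) => /v2r_inj->.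
have uniq_rs : uniq rs.
  rewrite map_inj_uniq ?enum_uniq // => v w /r2v_inj.
  exact: (row_free_inj (row_base_free K)).
have qpoly_neq0 : qpoly c != 0 by rewrite qpoly_eq0.
have := max_poly_roots qpoly_neq0 rs_roots uniq_rs.
by rewrite size_map -cardE card_mx mul1n mxrank_ker.
Qed.

Lemma rank_qpoly_mx c t : (t <= m)%N -> c != 0 ->
  (forall i : 'I_m, (t <= i)%N -> c i = 0) -> (m - t < \rank (qpoly_mx c))%N.
Proof.
move=> le_tm c_neq0 c_t.
have t_gt0 : (0 < t)%N.
  rewrite lt0n; apply: contra c_neq0 => /eqP t0.
  by apply/eqP/ffunP => i; rewrite ffunE c_t ?t0.
have := leq_trans (card_ker_qpoly_mx c_neq0) (size_qpoly c_t).
rewrite ltnS leq_exp2l ?finNzRing_gt1 //.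
have := rank_leq_row (qpoly_mx c); lia.
Qed.

Lemma qpoly_mx_inj : injective qpoly_mx.
Proof.
move=> c1 c2 eq_c12; apply/eqP; rewrite -subr_eq0; apply/negPn/negP => c12_neq0.
have c12_top (i : 'I_m) : (m <= i)%N -> (c1 - c2) i = 0 by rewrite leqNgt ltn_ord.
have := rank_qpoly_mx (leqnn m) c12_neq0 c12_top.
by rewrite qpoly_mxB eq_c12 subrr mxrank0 subnn.
Qed.

Lemma qpoly_mx_bij : bijective qpoly_mx.
Proof.
apply: inj_card_bij qpoly_mx_inj _.
by rewrite card_mx card_ffun card_fieldExt card_ord -expnM.
Qed.

Lemma has_d_coloring_qpoly d : (d <= m)%N -> has_d_coloring F m m d (q ^ (m * d)).
Proof.
move=> le_dm; have [coef _ coefK] := qpoly_mx_bij.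
have top_lt (i : 'I_d) : (m - d + i < m)%N by have := ltn_ord i; lia.
apply: (@has_d_coloring_fin _ {ffun 'I_d -> T} _ _ _ _
          (fun M => [ffun i => coef M (Ordinal (top_lt i))])).
  by rewrite card_ffun card_fieldExt card_ord -expnM.
move=> M1 M2 neM rkM; apply/negP => /eqP eq_col.
pose c := coef M1 - coef M2.
have Mc : qpoly_mx c = M1 - M2 by rewrite qpoly_mxB !coefK.
have c_neq0 : c != 0.
  by apply: contra neM; rewrite subr_eq0 => /eqP/(congr1 qpoly_mx); rewrite !coefK => ->.
have c_top (i : 'I_m) : (m - d <= i)%N -> c i = 0.
  move=> le_i; have j_lt : (i - (m - d) < d)%N by have := ltn_ord i; lia.
  move: eq_col => /= /ffunP/(_ (Ordinal j_lt)); rewrite !ffunE.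
  have -> : Ordinal (top_lt (Ordinal j_lt)) = i by apply: val_inj; rewrite /= subnKC.
  by move=> ->; rewrite subrr.
have := rank_qpoly_mx (leq_subr d m) c_neq0 c_top.
by rewrite Mc subKn // ltnNge rkM.
Qed.

End LinearizedPolynomials.

Theorem theorem3p1 (F : finFieldType) (q N n d : nat) :
  #|F| = q -> (1 <= n)%N -> (n <= N)%N -> (1 <= d)%N -> (d <= n)%N ->
  chi_d F N n d = (q ^ (N * d))%N.
Proof.
move=> <- n_gt0 le_nN _ le_dn.
have [L dimL] := fieldExt_of_dim F (leq_trans n_gt0 le_nN).
have dimT : vector.dim (finvect_type L) = N by rewrite -dimL dimvf.
apply: chi_d_eq => [|L' colL'].
  have := @has_d_coloring_qpoly F L d; rewrite dimT => /(_ (leq_trans le_dn le_nN)).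
  exact: has_d_coloring_widen.
by apply: card_le_has_d_coloring; apply: has_d_coloring_widen le_dn colL'.
Qed.
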